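(* Let $C\xleftarrow{f}M\xrightarrow{g}D$ be a span of sets, regarded as the linear $(C\mathcal y,D\mathcal y)$-bicomodule $M\mathcal y$. Then the following $(D\mathcal y,C\mathcal y)$-bicomodules are isomorphic: (i) the transpose span $D\xleftarrow{g}M\xrightarrow{f}C$; (ii) the dual $\big((M\mathcal y)^{\dagger r}\big)^\vee$ of the right adjoint of $M\mathcal y$ in $\mathbb C\mathbf{at}^\sharp$; (iii) the left adjoint $\big((M\mathcal y)^\vee\big)^{\dagger l}$ of the dual of $M\mathcal y$ in $\mathbb C\mathbf{at}^\sharp$.
   Context: $\mathbb C\mathbf{at}^\sharp$: bicategory of comonoids in $(\mathbf{Poly},\mathcal y,\triangleleft)$ (small categories), bicomodules, bicomodule maps, horizontal composition $\triangleleft_d$. $C\mathcal y$ is the discrete category on a set $C$. A span $C\leftarrow M\to D$ is the same as a $(C\mathcal y,D\mathcal y)$-bicomodule with linear carrier $M\mathcal y$; its prafunctor $D\text{-}\mathbf{Set}\to C\text{-}\mathbf{Set}$ is $\Sigma_f\Delta_g$. Linear bicomodules between discrete categories are exactly the left adjoints in $\mathbb C\mathbf{at}^\sharp$, with conjunctive right adjoints; $^{\dagger r}$ and $^{\dagger l}$ denote right and left adjoints. The dual $m^\vee:=[m,\bot]_{C\mathcal y,D\mathcal y}$, where $\bot=CD\mathcal y$ is the terminal span and $[-,-]$ the local internal hom, exchanges linear and conjunctive bicomodules: $(\sum_{a\in C}M_a\mathcal y)^\vee\cong\sum_{a\in C}\mathcal y^{M_a}$ and conversely; in prafunctor terms it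 sends $\Sigma_f\Delta_g$ to $\Pi_f\Delta_g$ and vice versa. *)

(* A (C y, D y)-bicomodule: a polynomial whose positions lie over C and whose
   directions are labelled by D.  Its prafunctor goes D-Set -> C-Set. *)
Record bicom (C D : Type) : Type := Bicom {
  bpos : Type;
  bbase : bpos -> C;
  bdir : bpos -> Type;
  blab : forall i, bdir i -> D }.
Arguments Bicom {C D}.
Arguments bpos {C D}. Arguments bbase {C D}. Arguments bdir {C D}. Arguments blab {C D}.

Record bmor {C D} (p q : bicom C D) : Type := Bmor {
  mpos : bpos p -> bpos q;
  mbase : forall i, bbase q (mpos i) = bbase p i;
  mdir : forall i, bdir q (mpos i) -> bdir p i;
  mlab : forall i e, blab p i (mdir i e) = blab q (mpos i) e }.
Arguments Bmor {C D p q}.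
Arguments mpos {C D p q}. Arguments mbase {C D p q}.
Arguments mdir {C D p q}. Arguments mlab {C D p q}.

Definition bmor_eq {C D} {p q : bicom C D} (a b : bmor p q) : Prop :=
  exists H : forall i, mpos a i = mpos b i,
    forall i (e : bdir q (mpos a i)),
      mdir a i e = mdir b i (eq_rect _ (bdir q) e _ (H i)).

Definition bmid {C D} (p : bicom C D) : bmor p p :=
  Bmor (fun i => i) (fun i => eq_refl) (fun i e => e) (fun i e => eq_refl).

(* vertical composition, diagrammatic order: a then b *)
Definition bmcomp {C D} {p q r : bicom C D} (a : bmor p q) (b : bmor q r) : bmor p r :=
  Bmor (fun i => mpos b (mpos a i))
       (fun i => eq_trans (mbase b (mpos a i)) (mbase a i))
       (fun i e => mdir a i (mdir b (mpos a i) e))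
       (fun i e => eq_trans (mlab a i _) (mlab b _ e)).

Definition biso {C D} (p q : bicom C D) : Prop :=
  exists (f : bmor p q) (g : bmor q p),
    bmor_eq (bmcomp f g) (bmid p) /\ bmor_eq (bmcomp g f) (bmid q).

Record span (C D : Type) : Type := Span {
  apex : Type;
  sleft : apex -> C;
  sright : apex -> D }.
Arguments Span {C D}. Arguments apex {C D}.
Arguments sleft {C D}. Arguments sright {C D}.

(* the span C <-f- M -g-> D as the linear bicomodule M y *)
Definition linear {C D} (S : span C D) : bicom C D :=
  Bicom (apex S) (sleft S) (fun _ => unit) (fun m _ => sright S m).

Definition transpose {C D} (S : span C D) : span D C :=
  Span (apex S) (sright S) (sleft S).

Definition bid (C : Type) : bicom C C :=
  Bicom C (fun c => c) (fun _ => unit) (fun c _ => c).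

Definition bcomp {C D E} (p : bicom C D) (q : bicom D E) : bicom C E :=
  Bicom { i : bpos p & forall e : bdir p i, { j : bpos q | bbase q j = blab p i e } }
        (fun x => bbase p (projT1 x))
        (fun x => { e : bdir p (projT1 x) & bdir q (proj1_sig (projT2 x e)) })
        (fun x d => blab q (proj1_sig (projT2 x (projT1 d))) (projT2 d)).

Definition whiskerR {C D E} {p p' : bicom C D} (a : bmor p p') (q : bicom D E)
  : bmor (bcomp p q) (bcomp p' q) :=
  Bmor (p := bcomp p q) (q := bcomp p' q)
    (fun x => existT _ (mpos a (projT1 x))
       (fun e' => exist _ (proj1_sig (projT2 x (mdir a (projT1 x) e')))
          (eq_trans (proj2_sig (projT2 x (mdir a (projT1 x) e')))
                    (mlab a (projT1 x) e'))))
    (fun x => mbase a (projT1 x))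
    (fun x d => existT _ (mdir a (projT1 x) (projT1 d)) (projT2 d))
    (fun x d => eq_refl).

Definition whiskerL {C D E} (p : bicom C D) {q q' : bicom D E} (b : bmor q q')
  : bmor (bcomp p q) (bcomp p q') :=
  Bmor (p := bcomp p q) (q := bcomp p q')
    (fun x => existT _ (projT1 x)
       (fun e => exist _ (mpos b (proj1_sig (projT2 x e)))
          (eq_trans (mbase b _) (proj2_sig (projT2 x e)))))
    (fun x => eq_refl)
    (fun x d => existT _ (projT1 d) (mdir b _ (projT2 d)))
    (fun x d => mlab b _ (projT2 d)).

Definition lunit {C D} (p : bicom C D) : bmor (bcomp (bid C) p) p :=
  Bmor (p := bcomp (bid C) p) (q := p)
    (fun x => proj1_sig (projT2 x tt))
    (fun x => proj2_sig (projT2 x tt))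
    (fun x e => existT _ tt e)
    (fun x e => eq_refl).

Definition lunit_inv {C D} (p : bicom C D) : bmor p (bcomp (bid C) p) :=
  Bmor (p := p) (q := bcomp (bid C) p)
    (fun i => existT _ (bbase p i) (fun _ => exist _ i eq_refl))
    (fun i => eq_refl)
    (fun i d => projT2 d)
    (fun i d => eq_refl).

Definition runit {C D} (p : bicom C D) : bmor (bcomp p (bid D)) p :=
  Bmor (p := bcomp p (bid D)) (q := p)
    (fun x => projT1 x)
    (fun x => eq_refl)
    (fun x e => existT _ e tt)
    (fun x e => proj2_sig (projT2 x e)).

Definition runit_inv {C D} (p : bicom C D) : bmor p (bcomp p (bid D)) :=
  Bmor (p := p) (q := bcomp p (bid D))
    (fun i => existT _ i (fun e => exist _ (blab p i e) eq_refl))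
    (fun i => eq_refl)
    (fun i d => projT1 d)
    (fun i d => eq_refl).

Definition assoc {C D E F} (p : bicom C D) (q : bicom D E) (r : bicom E F)
  : bmor (bcomp (bcomp p q) r) (bcomp p (bcomp q r)) :=
  Bmor (p := bcomp (bcomp p q) r) (q := bcomp p (bcomp q r))
    (fun x => existT _ (projT1 (projT1 x))
       (fun e => exist _
          (existT _ (proj1_sig (projT2 (projT1 x) e))
                    (fun d => projT2 x (existT _ e d)))
          (proj2_sig (projT2 (projT1 x) e))))
    (fun x => eq_refl)
    (fun x z => existT _ (existT _ (projT1 z) (projT1 (projT2 z))) (projT2 (projT2 z)))
    (fun x z => eq_refl).

Definition assoc_inv {C D E F} (p : bicom C D) (q : bicom D E) (r : bicom E F)
  : bmor (bcomp p (bcomp q r)) (bcomp (bcomp p q) r) :=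
  Bmor (p := bcomp p (bcomp q r)) (q := bcomp (bcomp p q) r)
    (fun x => existT _
       (existT _ (projT1 x)
          (fun e => exist _ (projT1 (proj1_sig (projT2 x e))) (proj2_sig (projT2 x e))))
       (fun ed => projT2 (proj1_sig (projT2 x (projT1 ed))) (projT2 ed)))
    (fun x => eq_refl)
    (fun x z => existT _ (projT1 (projT1 z)) (existT _ (projT2 (projT1 z)) (projT2 z)))
    (fun x z => eq_refl).

(* Adjunction l -| r in Cat#, for l : (C y, D y)-bicomodule (prafunctor
   D-Set -> C-Set) and r : (D y, C y)-bicomodule; p <| q is composition of
   prafunctors p o q, so the unit is  D y => r <| l  and the counit is
   l <| r => C y, with the two triangle identities. *)
Definition is_adjunction {C D} (l : bicom C D) (r : bicom D C)
  (eta : bmor (bid D) (bcomp r l)) (eps : bmor (bcomp l r) (bid C)) : Prop :=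
  bmor_eq
    (bmcomp (runit_inv l)
    (bmcomp (whiskerL l eta)
    (bmcomp (assoc_inv l r l)
    (bmcomp (whiskerR eps l)
            (lunit l))))) (bmid l)
  /\
  bmor_eq
    (bmcomp (lunit_inv r)
    (bmcomp (whiskerR eta r)
    (bmcomp (assoc r l r)
    (bmcomp (whiskerL r eps)
            (runit r))))) (bmid r).

Definition adjoint {C D} (l : bicom C D) (r : bicom D C) : Prop :=
  exists eta eps, is_adjunction l r eta eps.

(* The dual m^v := [m, bot]_{C y, D y}, bot = C D y the terminal span, with the
   local internal hom written out for discrete categories: over c : C, a
   position is a map m_c -> bot_c, i.e. a choice of a direction of every
   position of m over c; its directions are the positions of m over c, the
   one for i being labelled by the label of the chosen direction of i. *)
Definition bdual {C D} (p : bicom C D) : bicom C D :=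
  Bicom { c : C & forall i : { i : bpos p | bbase p i = c }, bdir p (proj1_sig i) }
        (fun x => projT1 x)
        (fun x => { i : bpos p | bbase p i = projT1 x })
        (fun x i => blab p (proj1_sig i) (projT2 x i)).

From Stdlib Require Import ProofIrrelevance FunctionalExtensionality.

(* The right adjoint of a linear bicomodule [M y] is the conjunctive bicomodule
   [sum_d y^(M_d)] of the transpose span, which is exactly the dual of [M^T y];
   read with the roles of [C] and [D] exchanged, the same unit and counit show that
   [M^T y] is left adjoint to [(M y)^v].  For the identifications, the triangle
   identities force a right adjoint [R] of [M y] to have a single position over
   each [d], whose directions the unit sends bijectively onto the fibre [M_d], so
   a section of [R] over [d] is an element of [M_d]; dually, the counit exhibits
   any left adjoint of [(M y)^v] as having positions [M] and one direction each. *)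

Lemma dual_dir_rew {C D} (p : bicom C D) (x y : bpos (bdual p)) (H : x = y)
  (e : bdir (bdual p) x) : proj1_sig (eq_rect x (bdir (bdual p)) e y H) = proj1_sig e.
Proof. now destruct H. Qed.

Lemma dual_choice_rew {C D} (p : bicom C D) (c c' : C) (H : c = c')
  (t : forall i : {i : bpos p | bbase p i = c}, bdir p (proj1_sig i))
  (i : {i : bpos p | bbase p i = c'}) :
  eq_rect c (fun c => forall i : {i : bpos p | bbase p i = c}, bdir p (proj1_sig i)) t c' H i
  = t (exist _ (proj1_sig i) (eq_trans (proj2_sig i) (eq_sym H))).
Proof. now destruct H, i. Qed.

Lemma choice_rew {C D} (p : bicom C D) (c : C)
  (t : forall i : {i : bpos p | bbase p i = c}, bdir p (proj1_sig i))
  (a b : bpos p) (pa : bbase p a = c) (pb : bbase p b = c) (H : a = b) :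
  eq_rect a (bdir p) (t (exist _ a pa)) b H = t (exist _ b pb).
Proof. destruct H; simpl; now rewrite (proof_irrelevance _ pa pb). Qed.

Lemma dual_linear_pos_eq {C D} (T : span C D) (x y : bpos (bdual (linear T))) :
  projT1 x = projT1 y -> x = y.
Proof.
  destruct x as [c t], y as [c' t']; simpl; intros <-.
  f_equal; apply functional_extensionality_dep; intros i.
  now destruct (t i), (t' i).
Qed.

Lemma dual_linear_fibre_unique {C D} (T : span C D) (c : C)
  (a b : {x : bpos (bdual (linear T)) | projT1 x = c}) : a = b.
Proof.
  apply eq_sig_hprop; [intros; apply proof_irrelevance|].
  apply dual_linear_pos_eq; now rewrite (proj2_sig a), (proj2_sig b).
Qed.

Section Adjunction.
Context {C D : Type} (T : span C D).

Let Lt := linear (transpose T).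
Let Kd := bdual (linear T).

Definition linear_dual_unit : bmor (bid C) (bcomp Kd Lt) :=
  Bmor (p := bid C) (q := bcomp Kd Lt)
   (fun c => existT _ (existT _ c (fun _ => tt) : bpos Kd)
       (fun e => exist (fun m => sright T m = sright T (proj1_sig e)) (proj1_sig e) eq_refl))
   (fun c => eq_refl) (fun c _ => tt) (fun c d => eq_sym (proj2_sig (projT1 d))).

Definition linear_dual_counit : bmor (bcomp Lt Kd) (bid D) :=
  Bmor (p := bcomp Lt Kd) (q := bid D)
   (fun x => sright T (projT1 x)) (fun x => eq_refl)
   (fun x _ => existT (fun e => bdir Kd (proj1_sig (projT2 x e))) tt
        (exist _ (projT1 x) (eq_sym (proj2_sig (projT2 x tt)))))
   (fun x e => eq_refl).

Lemma linear_dual_is_adjunction :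
  is_adjunction Lt Kd linear_dual_unit linear_dual_counit.
Proof.
  split.
  - exists (fun _ => eq_refl). now intros i [].
  - unshelve eexists; [intros x; now apply dual_linear_pos_eq|].
    intros [c t] [m Hm]; simpl.
    apply eq_sig_hprop; [intros; apply proof_irrelevance|].
    symmetry; exact (dual_dir_rew (linear T) _ _ _ (exist _ m Hm)).
Qed.

Lemma linear_transpose_adjoint_dual : adjoint (linear (transpose T)) (bdual (linear T)).
Proof. exists linear_dual_unit, linear_dual_counit; apply linear_dual_is_adjunction. Qed.

End Adjunction.

Section RightAdjoint.
Context {C D : Type} (S : span C D) (R : bicom D C)
  (eta : bmor (bid D) (bcomp R (linear S))) (eps : bmor (bcomp (linear S) R) (bid C)).
Hypothesis adj : is_adjunction (linear S) R eta eps.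

Definition unit_pos d : bpos R := projT1 (mpos eta d).
Definition unit_pos_base d : bbase R (unit_pos d) = d := mbase eta d.
Definition unit_apex d e : apex S := proj1_sig (projT2 (mpos eta d) e).
Definition unit_apex_right d e : d = sright S (unit_apex d e) :=
  mlab eta d (existT (fun _ => unit) e tt).
Definition unit_apex_left d e : sleft S (unit_apex d e) = blab R (unit_pos d) e :=
  proj2_sig (projT2 (mpos eta d) e).

Let counit_arg m j (p : bbase R j = sright S m) : bpos (bcomp (linear S) R) :=
  existT (fun m => unit -> {j : bpos R | bbase R j = sright S m}) m (fun _ => exist _ j p).

Definition counit_dir m j p : bdir R j := projT2 (mdir eps (counit_arg m j p) tt).
Definition counit_dir_label m j p : sleft S m = blab R j (counit_dir m j p) :=
  eq_sym (eq_trans (mlab eps (counit_arg m j p) tt) (mbase eps (counit_arg m j p))).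

Lemma counit_dir_irrel m j p p' : counit_dir m j p = counit_dir m j p'.
Proof. now destruct (proof_irrelevance _ p p'). Qed.

(* The triangle identity delivers the counit at an argument whose choice
   function is not syntactically constant. *)
Lemma counit_dir_fun m j (P : unit -> bbase R j = sright S m) :
  projT2 (mdir eps (existT (fun m => unit -> {j : bpos R | bbase R j = sright S m}) m
                       (fun u => exist _ j (P u))) tt)
  = counit_dir m j (P tt).
Proof.
  replace P with (fun _ : unit => P tt); [reflexivity|].
  apply functional_extensionality; now intros [].
Qed.

Lemma unit_apex_counit_dir m :
  unit_apex (sright S m) (counit_dir m _ (unit_pos_base (sright S m))) = m.
Proof. destruct adj as [[H _] _]; exact (H m). Qed.

Lemma unit_pos_bbase i : unit_pos (bbase R i) = i.
Proof. destruct adj as [_ [H _]]; exact (H i). Qed.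

Lemma counit_dir_unit_apex i e p :
  counit_dir (unit_apex (bbase R i) e) i p = eq_rect _ (bdir R) e i (unit_pos_bbase i).
Proof.
  destruct adj as [_ [H E]]; simpl in E.
  rewrite (counit_dir_irrel _ _ p (eq_trans eq_refl (unit_apex_right (bbase R i) e))).
  etransitivity; [symmetry; exact (counit_dir_fun (unit_apex (bbase R i) e) i
    (fun u => eq_trans eq_refl (mlab eta (bbase R i) (existT (fun _ => unit) e u))))|].
  etransitivity; [exact (E i e)|]; f_equal; apply proof_irrelevance.
Qed.

Lemma right_adjoint_fibre_unique d (a b : {i : bpos R | bbase R i = d}) : a = b.
Proof.
  enough (Hc : forall a : {i : bpos R | bbase R i = d}, a = exist _ (unit_pos d) (unit_pos_base d))
    by now rewrite (Hc a), (Hc b).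
  intros [i <-]; apply eq_sig_hprop; [intros; apply proof_irrelevance|].
  symmetry; apply unit_pos_bbase.
Qed.

Definition transpose_to_dual : bmor (linear (transpose S)) (bdual R) :=
  Bmor (p := linear (transpose S)) (q := bdual R)
    (fun m => existT _ (sright S m) (fun i => counit_dir m (proj1_sig i) (proj2_sig i)))
    (fun m => eq_refl) (fun m _ => tt)
    (fun m i => counit_dir_label m (proj1_sig i) (proj2_sig i)).

Definition dual_to_transpose : bmor (bdual R) (linear (transpose S)) :=
  Bmor (p := bdual R) (q := linear (transpose S))
    (fun x => unit_apex (projT1 x) (projT2 x (exist _ _ (unit_pos_base (projT1 x)))))
    (fun x => eq_sym (unit_apex_right _ _))
    (fun x _ => exist _ _ (unit_pos_base (projT1 x)))
    (fun x _ => eq_sym (unit_apex_left _ _)).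

Lemma dual_right_adjoint_iso : biso (linear (transpose S)) (bdual R).
Proof.
  exists transpose_to_dual, dual_to_transpose; split.
  - exists unit_apex_counit_dir. intros i e. now destruct (mdir _ _ _), (mdir _ _ _).
  - unshelve eexists.
    + intros [d t]; simpl.
      apply eq_existT_uncurried; exists (eq_sym (unit_apex_right _ _)).
      apply functional_extensionality_dep; intros i.
      rewrite dual_choice_rew. destruct i as [j <-]; simpl.
      rewrite counit_dir_unit_apex; apply choice_rew.
    + intros x e; apply right_adjoint_fibre_unique.
Qed.

End RightAdjoint.

Section LeftAdjoint.
Context {C D : Type} (S : span C D) (L : bicom D C)
  (eta : bmor (bid C) (bcomp (bdual (linear S)) L))
  (eps : bmor (bcomp L (bdual (linear S))) (bid D)).
Hypothesis adj : is_adjunction L (bdual (linear S)) eta eps.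

Let K := bdual (linear S).

Definition unit_dual c : bpos K := projT1 (mpos eta c).
Definition unit_dual_base c : projT1 (unit_dual c) = c := mbase eta c.
Definition unit_fibre c (e : {m : apex S | sleft S m = projT1 (unit_dual c)}) : bpos L :=
  proj1_sig (projT2 (mpos eta c) e).
Definition unit_fibre_base c e : bbase L (unit_fibre c e) = sright S (proj1_sig e) :=
  proj2_sig (projT2 (mpos eta c) e).
Definition unit_fibre_label c e d : c = blab L (unit_fibre c e) d := mlab eta c (existT _ e d).

Definition counit_apex_at l (Y : forall e : bdir L l, {x : bpos K | projT1 x = blab L l e})
  : apex S := proj1_sig (projT2 (mdir eps (existT _ l Y) tt)).

Let canonical_arg l : bpos (bcomp L K) :=
  existT _ l (fun e => exist (fun x : bpos K => projT1 x = blab L l e)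
                             (unit_dual (blab L l e)) (unit_dual_base (blab L l e))).

Definition counit_ldir l : bdir L l := projT1 (mdir eps (canonical_arg l) tt).
Definition counit_apex l : apex S := proj1_sig (projT2 (mdir eps (canonical_arg l) tt)).
Definition counit_apex_left l : sleft S (counit_apex l) = projT1 (unit_dual (blab L l (counit_ldir l))) :=
  proj2_sig (projT2 (mdir eps (canonical_arg l) tt)).
Definition counit_apex_right l : sright S (counit_apex l) = bbase L l :=
  eq_trans (mlab eps (canonical_arg l) tt) (mbase eps (canonical_arg l)).

Lemma counit_apex_at_irrel l Y Y' : counit_apex_at l Y = counit_apex_at l Y'.
Proof.
  replace Y' with Y; [reflexivity|].
  apply functional_extensionality_dep; intros; apply dual_linear_fibre_unique.
Qed.

Lemma counit_apex_at_unit_fibre c e Y : counit_apex_at (unit_fibre c e) Y = proj1_sig e.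
Proof.
  destruct adj as [_ [? E]]; simpl in E.
  pose proof (f_equal (@proj1_sig _ _) (E (existT _ c (fun _ => tt)) e)) as Ee.
  rewrite (dual_dir_rew (linear S)) in Ee.
  etransitivity; [apply counit_apex_at_irrel|exact Ee].
Qed.

Lemma unit_fibre_congr c c' (H : c = c') e e' :
  proj1_sig e = proj1_sig e' -> unit_fibre c e = unit_fibre c' e'.
Proof.
  destruct H; intros He.
  now rewrite (eq_sig_hprop (fun _ => proof_irrelevance _) e e' He).
Qed.

Definition transpose_to_left_adjoint : bmor (linear (transpose S)) L :=
  Bmor (p := linear (transpose S)) (q := L)
   (fun m => unit_fibre (sleft S m) (exist _ m (eq_sym (unit_dual_base (sleft S m)))))
   (fun m => unit_fibre_base _ _) (fun m _ => tt) (fun m d => unit_fibre_label _ _ d).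

Definition left_adjoint_to_transpose : bmor L (linear (transpose S)) :=
  Bmor (p := L) (q := linear (transpose S))
   counit_apex counit_apex_right (fun l _ => counit_ldir l)
   (fun l _ => eq_sym (eq_trans (counit_apex_left l) (unit_dual_base _))).

Lemma left_adjoint_dual_iso : biso (linear (transpose S)) L.
Proof.
  exists transpose_to_left_adjoint, left_adjoint_to_transpose; split.
  - unshelve eexists.
    + intros m; apply counit_apex_at_unit_fibre.
    + intros i e. now destruct (mdir _ _ _), (mdir _ _ _).
  - destruct adj as [[H E] _]; simpl in H, E.
    unshelve eexists.
    + intros l; refine (eq_trans _ (H l)).
      apply unit_fibre_congr; [exact (eq_trans (counit_apex_left l) (unit_dual_base _))|reflexivity].
    + intros l e; simpl; rewrite eq_trans_rew_distr; apply E.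
Qed.

End LeftAdjoint.

Theorem corollary2p53 (C D : Type) (S : span C D) :
  (* (ii): the right adjoint of M y exists, and its dual is the transpose span *)
  (exists R : bicom D C, adjoint (linear S) R) /\
  (forall R : bicom D C, adjoint (linear S) R ->
     biso (linear (transpose S)) (bdual R)) /\
  (* (iii): the left adjoint of (M y)^v exists, and it is the transpose span *)
  (exists L : bicom D C, adjoint L (bdual (linear S))) /\
  (forall L : bicom D C, adjoint L (bdual (linear S)) ->
     biso (linear (transpose S)) L).
Proof.
  split; [|split; [|split]].
  - exists (bdual (linear (transpose S))).
    exact (linear_transpose_adjoint_dual (transpose S)).
  - intros R [eta [eps adj]]; exact (dual_right_adjoint_iso S R eta eps adj).
  - exists (linear (transpose S)); apply linear_transpose_adjoint_dual.
  - intros L [eta [eps adj]]; exact (left_adjoint_dual_iso S L eta eps adj).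
Qed.
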